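(* Let $\mathcal{A}=\{A_1,\dots,A_m\}$ be a bimodal collection of pairwise disjoint nonempty subsets of a finite abelian group $G$, with internal difference groups $H_1,\dots,H_m$, such that $|A_1|<|H_1|$ and $|A_i|=|H_i|$ for all $2\le i\le m$. Let $D=H_2+H_3+\dots+H_m$, and suppose $\mathcal{A}$ is in canonical position, i.e. $A_1\subseteq H_1$ and $D\subseteq H_1\setminus A_1$. Then: (1) $A_1\subseteq H_1\setminus D$ and $A_1$ is a union of cosets of $D$; (2) each $A_i$ with $2\le i\le m$ is a coset of $H_i$, and $A_2,\dots,A_m$ arise from a subdivision of cosets of $H_1$, i.e. $A_2\cup\dots\cup A_m$ is a union of cosets of $H_1$ and each $A_i$ ($i\ge2$) is contained in a single coset of $H_1$.
   Context: $G$ is written additively. The internal difference group $H_i$ of $A_i$ is the subgroup generated by all $x-y$ with $x,y\in A_i$; $A_i$ lies in a single coset of $H_i$ and $|A_i|\le|H_i|$. A collection $\{A_1,\dots,A_m\}$ of pairwise disjoint subsets of $G$ is bimodal if for every $i$ and every $\delta\in G\setminus\{0\}$, the number $N_i(\delta)$ of pairs $(a,b)$ with $a\in A_i$, $b\in A_j$ for some $j\neq i$, and $a-b=\delta$, satisfies $N_i(\delta)\in\{0,|A_i|\}$. An empty sum of subgroups is $\{0\}$. *)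

From mathcomp Require Import all_boot all_order all_algebra.
Set Implicit Arguments. Unset Strict Implicit. Unset Printing Implicit Defensive.
Import GRing.Theory.
Local Open Scope ring_scope.

Section Defs.
Variable G : finZmodType.

Definition is_subgroup (S : {set G}) : bool :=
  (0 \in S) && [forall x in S, forall y in S, (x - y) \in S].

Definition gen_subgroup (S : {set G}) : {set G} :=
  \bigcap_(K : {set G} | is_subgroup K && (S \subset K)) K.

Definition diff_group (A : {set G}) : {set G} :=
  gen_subgroup [set x - y | x in A, y in A].

Definition sumset (A B : {set G}) : {set G} := [set a + b | a in A, b in B].

Definition coset (x : G) (H : {set G}) : {set G} := [set x + h | h in H].

(* Family indexed 1..m, A : nat -> {set G}. *)
Definition Ncount (m : nat) (A : nat -> {set G}) (i : nat) (delta : G) : nat :=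
  #|[set p : G * G | (p.1 \in A i)
        && [exists j : 'I_m.+1, (1 <= j)%N && (j != i :> nat) && (p.2 \in A j)]
        && (p.1 - p.2 == delta)]|.

Definition bimodal (m : nat) (A : nat -> {set G}) : Prop :=
  forall i : nat, (1 <= i <= m)%N -> forall delta : G, delta != 0 ->
    Ncount m A i delta = 0%N \/ Ncount m A i delta = #|A i|.

End Defs.

From mathcomp Require Import all_boot all_order all_algebra.
Import GRing.Theory.

Set Implicit Arguments.
Unset Strict Implicit.
Unset Printing Implicit Defensive.

Local Open Scope ring_scope.

(** Bimodality of A_i says that once one difference a' - y (a' in A_i, y in
    another member) is realised, it is realised from every a in A_i.  Hence
    the union B_i = [others i] of the other members is stable under
    translation by the differences of A_i, and so by the whole group H_i.
    For j >= 2 this makes A_1 stable under H_j: translating a in A_1 by H_j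
    stays inside B_j, and cannot land in B_1, because B_1 is stable under
    H_j <= D <= H_1 while A_1 and B_1 are disjoint.  So A_1 is a union of
    D-cosets, B_1 = A_2 u ... u A_m is a union of H_1-cosets, and
    |A_i| = |H_i| forces A_i to be an H_i-coset, which lies in one H_1-coset
    as H_i <= D <= H_1. *)

Section Subgroups.
Variable G : finZmodType.
Implicit Types (S K X : {set G}) (x y d : G).

Lemma subgroup0 K : is_subgroup K -> 0 \in K.
Proof. by case/andP. Qed.

Lemma subgroupB K x y : is_subgroup K -> x \in K -> y \in K -> x - y \in K.
Proof. by case/andP=> _ /forall_inP sK /sK/forall_inP; apply. Qed.

Lemma subgroupN K x : is_subgroup K -> x \in K -> - x \in K.
Proof. by move=> sK xK; rewrite -sub0r subgroupB ?subgroup0. Qed.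

Lemma subgroupD K x y : is_subgroup K -> x \in K -> y \in K -> x + y \in K.
Proof. by move=> sK xK yK; rewrite -[y]opprK subgroupB ?subgroupN. Qed.

Lemma gen_subgroup0 S : 0 \in gen_subgroup S.
Proof. by apply/bigcapP => K /andP[/subgroup0]. Qed.

Lemma sub_gen_subgroup S : S \subset gen_subgroup S.
Proof. by apply/bigcapsP => K /andP[]. Qed.

Lemma gen_subgroup_min S K : is_subgroup K -> S \subset K -> gen_subgroup S \subset K.
Proof. by move=> sK SK; apply: bigcap_inf; rewrite sK SK. Qed.

Lemma coset_diff_group S x :
  x \in S -> #|S| = #|diff_group S| -> S = coset x (diff_group S).
Proof.
move=> xS cardS; apply/eqP; rewrite eqEcard card_imset; last exact: addrI.
rewrite cardS leqnn andbT; apply/subsetP => a aS; apply/imsetP.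
exists (a - x); last by rewrite addrC subrK.
exact/(subsetP (sub_gen_subgroup _))/imset2_f.
Qed.

Definition stab S : {set G} := [set d | [forall y in S, y + d \in S]].

Lemma stabP S d : reflect (forall y, y \in S -> y + d \in S) (d \in stab S).
Proof. by rewrite inE; apply: forall_inP. Qed.

(* Finiteness: translation by a period maps S injectively, hence onto, S. *)
Lemma stab_subgroup S : is_subgroup (stab S).
Proof.
have stabB d y : d \in stab S -> y \in S -> y - d \in S.
  move=> /stabP dS yS; have : [set z + d | z in S] = S.
    apply/eqP; rewrite eqEcard card_imset ?leqnn ?andbT; last exact: addIr.
    by apply/subsetP => _ /imsetP[z zS ->]; apply: dS.
  by move/setP/(_ y); rewrite yS => /imsetP[z zS ->]; rewrite addrK.
apply/andP; split; first by apply/stabP => y; rewrite addr0.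
apply/forall_inP => x /stabP xS; apply/forall_inP => z zS; apply/stabP => y yS.
by rewrite addrA stabB ?xS.
Qed.

Lemma stab_bigcup_coset S K :
  0 \in K -> K \subset stab S -> S = \bigcup_(x in S) coset x K.
Proof.
move=> K0 /subsetP KS; apply/setP => y.
apply/idP/bigcupP => [yS|[x xS /imsetP[d /KS/stabP dS ->]]]; last exact: dS.
by exists y => //; apply/imsetP; exists 0; rewrite ?addr0.
Qed.

Lemma sumset_subl S X : 0 \in X -> S \subset sumset S X.
Proof. by move=> X0; apply/subsetP => x xS; apply/imset2P; exists x 0; rewrite ?addr0. Qed.

Lemma sumset_subr S X : 0 \in S -> X \subset sumset S X.
Proof. by move=> S0; apply/subsetP => x xX; apply/imset2P; exists 0 x; rewrite ?add0r. Qed.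

Section BigSumset.
Variables (F : nat -> {set G}) (r : seq nat).
Local Notation bigsum := (\big[@sumset G/[set 0]]_(j <- r) F j).

Lemma big_sumset0 : {in r, forall j, 0 \in F j} -> 0 \in bigsum.
Proof.
move=> F0; rewrite big_seq.
apply: (big_ind (fun U : {set G} => 0 \in U)) => [|X Y X0 Y0|j /F0 //].
  by rewrite inE.
by apply/imset2P; exists 0 0; rewrite ?addr0.
Qed.

Lemma big_sumset_sub K :
  is_subgroup K -> {in r, forall j, F j \subset K} -> bigsum \subset K.
Proof.
move=> sK FK; rewrite big_seq.
apply: (big_ind (fun U : {set G} => U \subset K)) => [|X Y XK YK|j /FK //].
  by rewrite sub1set subgroup0.
apply/subsetP => _ /imset2P[x y xX yY ->].
exact: subgroupD sK (subsetP XK _ xX) (subsetP YK _ yY).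
Qed.

End BigSumset.

Lemma sub_big_sumset (F : nat -> {set G}) r i :
  {in r, forall j, 0 \in F j} -> i \in r ->
  F i \subset \big[@sumset G/[set 0]]_(j <- r) F j.
Proof.
elim: r => [|k r IH] // F0; rewrite big_cons inE.
have F0r : {in r, forall j, 0 \in F j} by move=> j jr; apply/F0/mem_behead.
case/predU1P => [->|ir]; first exact/sumset_subl/big_sumset0.
exact: subset_trans (IH F0r ir) (sumset_subr _ (F0 _ (mem_head _ _))).
Qed.

Definition diff_pairs S X d : {set G * G} :=
  [set p | (p.1 \in S) && (p.2 \in X) && (p.1 - p.2 == d)].

(* The first projection is injective on [diff_pairs S X d], so it maps it onto S. *)
Lemma full_diff_pairs S X d :
  #|diff_pairs S X d| = #|S| -> forall a, a \in S -> a - d \in X.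
Proof.
move=> cardP a aS; set P := diff_pairs S X d.
have fstP : [set p.1 | p in P] = S.
  apply/eqP; rewrite eqEcard card_in_imset ?cardP ?leqnn ?andbT.
    by apply/subsetP => _ /imsetP[p pP ->]; move: pP; rewrite inE => /andP[/andP[]].
  move=> [p1 p2] [q1 q2]; rewrite !inE /= => /andP[_ /eqP dp] /andP[_ /eqP dq] eq1.
  by move: dq; rewrite -eq1 -dp => /addrI/oppr_inj->; rewrite eq1.
move: aS; rewrite -fstP => /imsetP[[p1 p2]]; rewrite inE /=.
by case/andP=> [/andP[_ p2X] /eqP <-] ->; rewrite opprB addrC subrK.
Qed.

End Subgroups.

Section Bimodal.
Variables (G : finZmodType) (m : nat) (A : nat -> {set G}).

Definition others i : {set G} :=
  [set y | [exists j : 'I_m.+1, (1 <= j)%N && (j != i :> nat) && (y \in A j)]].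

Lemma mem_othersP i y :
  reflect (exists2 j, (1 <= j <= m)%N /\ j != i & y \in A j) (y \in others i).
Proof.
rewrite inE; apply: (iffP existsP) => [[j /andP[/andP[j1 ji] yA]]|].
  by exists (nat_of_ord j); rewrite // j1 -ltnS ltn_ord.
case=> j [/andP[j1 jm] ji] yA.
by exists (@Ordinal m.+1 j jm); rewrite j1 ji.
Qed.

Lemma bigcup_others1 : \bigcup_(2 <= i < m.+1) A i = others 1.
Proof.
apply/setP => y; rewrite (big_morph (fun S : {set G} => y \in S) (in_setU y) (in_set0 y)).
rewrite big_has; apply/hasP/mem_othersP => [[i]|[i [/andP[i1 im] i1']]].
  rewrite mem_index_iota ltnS => /andP[i2 im] yA.
  by exists i; rewrite // gtn_eqF // (ltnW i2).
by exists i; rewrite // mem_index_iota ltnS im ltn_neqAle eq_sym i1' i1.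
Qed.

Lemma NcountE i d : Ncount m A i d = #|diff_pairs (A i) (others i) d|.
Proof. by apply: eq_card => p; rewrite !inE. Qed.

Hypothesis A_disjoint : forall i j : nat, (1 <= i <= m)%N -> (1 <= j <= m)%N ->
  i <> j -> [disjoint A i & A j].
Hypothesis A_bimodal : bimodal m A.

Lemma disjoint_others i : (1 <= i <= m)%N -> [disjoint A i & others i].
Proof.
move=> im; rewrite -setI_eq0; apply/eqP/setP => y; rewrite in_setI in_set0.
apply/andP => -[yAi /mem_othersP[j [jm ji] yAj]].
have ij : i <> j by move=> ij; rewrite ij eqxx in ji.
by rewrite (disjointFr (A_disjoint im jm ij) yAi) in yAj.
Qed.

Lemma bimodal_translate i a a' y : (1 <= i <= m)%N ->
  a \in A i -> a' \in A i -> y \in others i -> y + (a - a') \in others i.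
Proof.
move=> im aA a'A yO; have d0 : a' - y != 0.
  by rewrite subr_eq0; apply: contraTneq yO => <-; rewrite (disjointFr (disjoint_others im)).
have : #|diff_pairs (A i) (others i) (a' - y)| = #|A i|.
  have pair_in : (a', y) \in diff_pairs (A i) (others i) (a' - y).
    by rewrite in_set /= a'A yO eqxx.
  rewrite -NcountE; case: (A_bimodal im d0); rewrite NcountE // => /card0_eq.
  by move/(_ (a', y)); rewrite pair_in.
by move/full_diff_pairs/(_ a aA); rewrite opprB addrCA.
Qed.

Lemma diff_group_sub_stab_others i :
  (1 <= i <= m)%N -> diff_group (A i) \subset stab (others i).
Proof.
move=> im; apply: gen_subgroup_min (stab_subgroup _) _.
apply/subsetP => _ /imset2P[a a' aA a'A ->]; apply/stabP => y.
exact: bimodal_translate.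
Qed.

Lemma diff_group_sub_stab_first j : (2 <= j <= m)%N ->
  diff_group (A j) \subset diff_group (A 1) -> diff_group (A j) \subset stab (A 1).
Proof.
case/andP=> j2 jm Hj_H1; have jm' : (1 <= j <= m)%N by rewrite ltnW.
have m1 : (1 <= 1 <= m)%N by exact: ltnW (leq_trans j2 jm).
apply/subsetP => d dHj; apply/stabP => a aA1.
have : a + d \in others j.
  apply/(stabP _ _ (subsetP (diff_group_sub_stab_others jm') _ dHj)).
  by apply/mem_othersP; exists 1%N; rewrite // ltn_eqF.
case/mem_othersP => k [km kj] adA; have [k1 | k1] := eqVneq k 1%N; first by rewrite -k1.
have : a \in others 1.
  have /(subgroupN (stab_subgroup _))/stabP dS :=
    subsetP (diff_group_sub_stab_others m1) _ (subsetP Hj_H1 _ dHj).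
  by rewrite -[a](addrK d) dS //; apply/mem_othersP; exists k.
by rewrite (disjointFr (disjoint_others m1) aA1).
Qed.

End Bimodal.

Theorem theorem3p15 (G : finZmodType) (m : nat) (A : nat -> {set G}) :
  (1 <= m)%N ->
  (* pairwise disjoint *)
  (forall i j : nat, (1 <= i <= m)%N -> (1 <= j <= m)%N -> i <> j ->
     [disjoint A i & A j]) ->
  (* nonempty *)
  (forall i : nat, (1 <= i <= m)%N -> A i != set0) ->
  bimodal m A ->
  (#|A 1%N| < #|diff_group (A 1%N)|)%N ->
  (forall i : nat, (2 <= i <= m)%N -> #|A i| = #|diff_group (A i)|) ->
  (* canonical position, with D = H_2 + ... + H_m *)
  let D := \big[@sumset G/[set 0]]_(2 <= i < m.+1) diff_group (A i) in
  A 1%N \subset diff_group (A 1%N) ->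
  D \subset diff_group (A 1%N) :\: A 1%N ->
  ((A 1%N \subset diff_group (A 1%N) :\: D)
   /\ (exists X : {set G}, A 1%N = \bigcup_(x in X) coset x D))
  /\ ((forall i : nat, (2 <= i <= m)%N ->
         exists x : G, A i = coset x (diff_group (A i)))
      /\ (exists X : {set G},
            \bigcup_(2 <= i < m.+1) A i = \bigcup_(x in X) coset x (diff_group (A 1%N)))
      /\ (forall i : nat, (2 <= i <= m)%N ->
            exists x : G, A i \subset coset x (diff_group (A 1%N)))).
Proof.
move=> m1 A_disj A_ne A_bim _ A_card D A1_H1 D_H1A1.
have m1' : (1 <= 1 <= m)%N by rewrite m1.
have D0 : 0 \in D by apply: big_sumset0 => j _; apply: gen_subgroup0.
have Hi_D i : (2 <= i <= m)%N -> diff_group (A i) \subset D.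
  case/andP=> i2 im; apply: sub_big_sumset => [j _|]; first exact: gen_subgroup0.
  by rewrite mem_index_iota i2.
have D_H1 : D \subset diff_group (A 1) := subset_trans D_H1A1 (subsetDl _ _).
have D_stab : D \subset stab (A 1).
  apply: big_sumset_sub (stab_subgroup _) _ => j; rewrite mem_index_iota => j2.
  exact: diff_group_sub_stab_first A_disj A_bim _ j2 (subset_trans (Hi_D j j2) D_H1).
have A_coset i : (2 <= i <= m)%N -> exists x, A i = coset x (diff_group (A i)).
  move=> i2; have /set0Pn[x xA] : A i != set0 by apply: A_ne; case/andP: i2 => /ltnW -> ->.
  by exists x; apply: coset_diff_group xA (A_card i i2).
split; [split|split; [|split]].
- apply/subsetP => a aA; rewrite inE (subsetP A1_H1) // andbT.
  by apply/negP => /(subsetP D_H1A1); rewrite inE aA.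
- by exists (A 1); apply: stab_bigcup_coset D0 D_stab.
- exact: A_coset.
- exists (others m A 1); rewrite bigcup_others1.
  exact: stab_bigcup_coset (gen_subgroup0 _) (diff_group_sub_stab_others A_disj A_bim m1').
- move=> i i2; have [x ->] := A_coset i i2; exists x.
  exact/imsetS/(subset_trans (Hi_D i i2)).
Qed.
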